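(* Let $\mathfrak A$ be a structure. If $\mathfrak A$ is epc for $\mathrm{pp\text{-}Th}(\mathfrak A)$, then $\mathfrak A$ is a core. Conversely, if $\mathfrak A$ is pp-saturated (or finite) and its signature contains a relation symbol for every relation pp-definable in $\mathfrak A$, and $\mathfrak A$ is a core, then $\mathfrak A$ is epc for $\mathrm{pp\text{-}Th}(\mathfrak A)$.
   Context: pp-formulas are built from atomic formulas (including equalities and $\bot$) using $\wedge$ and $\exists$. $\mathrm{pp\text{-}Th}(\mathfrak A)$ is the set of pp-sentences true in $\mathfrak A$ together with the negations of pp-sentences false in $\mathfrak A$. A model $\mathfrak A$ of a theory $T$ is epc for $T$ if for every homomorphism $h$ from $\mathfrak A$ to a model $\mathfrak B$ of $T$, every tuple $\bar a$ from $A$ and every pp-formula $\phi$ with $\mathfrak B\models\phi(h(\bar a))$, we have $\mathfrak A\models\phi(\bar a)$. $\mathfrak A$ is a core if all its endomorphisms are embeddings (injective homomorphisms also preserving complements of relations). $\mathfrak A$ is pp-saturated if it is pp-$|A|$-saturated: for every sequence of fewer than $|A|$ parameters from $A$, every set of pp-formulas in one free variable over these parameters that is consistent with the theory of $\mathfrak A$ with the parameters named is realised in $A$. *)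

From mathcomp Require Import all_boot.
From Stdlib Require List.
Set Implicit Arguments. Unset Strict Implicit. Unset Printing Implicit Defensive.

Record signature := Signature { sym : Type; arity : sym -> nat }.

Record structure (S : signature) := Structure {
  carrier :> Type;
  interp : forall r : sym S, ('I_(arity r) -> carrier) -> Prop }.

Arguments interp {S} s r _.

Inductive ppf (S : signature) : Type :=
  | PBot
  | PEq (i j : nat)
  | PRel (r : sym S) (args : 'I_(arity r) -> nat)
  | PAnd (f g : ppf S)
  | PEx (i : nat) (f : ppf S).
Arguments PBot {S}.
Arguments PEq {S} i j.

Definition update (T : Type) (v : nat -> T) (i : nat) (a : T) : nat -> T :=
  fun n => if n == i then a else v n.

Fixpoint sat (S : signature) (A : structure S) (v : nat -> A) (f : ppf S) : Prop :=
  match f with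
  | PBot => False
  | PEq i j => v i = v j
  | PRel r args => interp A r (fun k => v (args k))
  | PAnd f g => sat v f /\ sat v g
  | PEx i f => exists a : A, sat (update v i a) f
  end.

Fixpoint free (S : signature) (f : ppf S) (n : nat) : Prop :=
  match f with
  | PBot => False
  | PEq i j => n = i \/ n = j
  | PRel r args => exists k, args k = n
  | PAnd f g => free f n \/ free g n
  | PEx i f => n <> i /\ free f n
  end.

Definition sentence (S : signature) (f : ppf S) : Prop := forall n, ~ free f n.

Definition holds (S : signature) (A : structure S) (f : ppf S) : Prop :=
  forall v : nat -> A, sat v f.

Inductive literal (S : signature) : Type :=
  | Pos (f : ppf S)
  | Neg (f : ppf S).

Definition theory (S : signature) := literal S -> Prop.

Definition model (S : signature) (T : theory S) (B : structure S) : Prop :=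
  forall l, T l -> match l with
                   | Pos f => holds B f
                   | Neg f => ~ holds B f
                   end.

Definition ppTh (S : signature) (A : structure S) : theory S :=
  fun l => match l with
           | Pos f => sentence f /\ holds A f
           | Neg f => sentence f /\ ~ holds A f
           end.

Definition hom (S : signature) (A B : structure S) (h : A -> B) : Prop :=
  forall (r : sym S) (t : 'I_(arity r) -> A), interp A r t -> interp B r (fun k => h (t k)).

Definition epc (S : signature) (T : theory S) (A : structure S) : Prop :=
  model T A /\
  forall (B : structure S) (h : A -> B), model T B -> hom h ->
    forall (v : nat -> A) (f : ppf S), sat (fun n => h (v n)) f -> sat v f.

Definition embedding (S : signature) (A B : structure S) (h : A -> B) : Prop :=
  hom h /\ (forall x y, h x = h y -> x = y) /\
  forall (r : sym S) (t : 'I_(arity r) -> A), interp B r (fun k => h (t k)) -> interp A r t.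

Definition core (S : signature) (A : structure S) : Prop :=
  forall e : A -> A, hom e -> embedding e.

Definition fewer_than_carrier (T : Type) (P : T -> Prop) : Prop :=
  ~ exists g : T -> {x : T | P x}, forall x y, g x = g y -> x = y.

(* A set of pp-formulas in the free variable 0 over
   parameters from P is given as a set of pairs (f, v), where v interprets
   the other free variables of f by parameters from P. Consistency with the
   theory of (A, P) is finite satisfiability in A. *)
Definition pp_saturated (S : signature) (A : structure S) : Prop :=
  forall (P : A -> Prop), fewer_than_carrier P ->
  forall (Sigma : ppf S -> (nat -> A) -> Prop),
    (forall f v, Sigma f v -> forall n, free f n -> n <> 0 -> P (v n)) ->
    (forall l : list (ppf S * (nat -> A)),
        (forall p, List.In p l -> Sigma p.1 p.2) ->
        exists a : A, forall p, List.In p l -> sat (update p.2 0 a) p.1) ->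
    exists a : A, forall f v, Sigma f v -> sat (update v 0 a) f.

Definition finite_structure (S : signature) (A : structure S) : Prop :=
  exists s : list A, forall a : A, List.In a s.

Definition pp_definable (S : signature) (A : structure S) (n : nat)
    (R : ('I_n -> A) -> Prop) : Prop :=
  exists f : ppf S, (forall m, free f m -> m < n) /\
    forall t : 'I_n -> A,
      R t <-> (forall v : nat -> A, (forall i : 'I_n, v i = t i) -> sat v f).

Definition all_pp_definable_named (S : signature) (A : structure S) : Prop :=
  forall (n : nat) (R : ('I_n -> A) -> Prop), @pp_definable S A n R ->
    exists (r : sym S) (e : arity r = n),
      forall t : 'I_n -> A, interp A r (fun k => t (cast_ord e k)) <-> R t.

From HB Require Import structures.
From mathcomp Require Import all_boot boolp wochoice.
From Stdlib Require Import Inverse_Image.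
Set Implicit Arguments. Unset Strict Implicit.

(* If [A] is epc for its own pp-theory, apply the epc property to an endomorphism
   [e] of [A] (a model of pp-Th(A)) and to an atomic formula: [e] reflects
   equalities and relations, i.e. it is an embedding.

   Conversely, let [h : A -> B] be a homomorphism to a model of pp-Th(A).  Well-order
   [A] in order type |A| and define [e : A -> A] by transfinite recursion, [e c]
   realizing the pp-type of [h c] over the parameters [h d], [d < c], read back
   in [A] at the parameters [e d].  A finite part of this type is one pp-formula
   [chi]; [exists x, chi] holds in [B], hence in [A] by induction (for sentences
   because [A] and [B] have the same pp-sentences), and there are fewer than |A|
   parameters, so pp-saturation realizes the type.  Then [B |= psi (h u)] implies
   [A |= psi (e u)] for every pp-formula [psi]; so [e] is an endomorphism, hence an
   embedding as [A] is a core, and it reflects the relation symbol naming the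
   relation defined by [phi]: [B |= phi (h v)] implies [A |= phi v]. *)

Record strict_wellorder (T : Type) (lt : T -> T -> Prop) : Prop := {
  swo_wf : well_founded lt;
  swo_trans : forall x y z, lt x y -> lt y z -> lt x z;
  swo_total : forall x y, lt x y \/ x = y \/ lt y x }.

Definition injects_into (T : Type) (P : T -> Prop) : Prop :=
  exists g : T -> T, injective g /\ forall x, P (g x).

Lemma fewer_than_carrierI (T : Type) (P : T -> Prop) :
  ~ injects_into P -> fewer_than_carrier P.
Proof.
move=> noinj [g ginj]; apply: noinj; exists (fun x => sval (g x)); split.
  have sval_inj (u w : {x | P x}) : sval u = sval w -> u = w.
    by case: u w => [a pa] [b pb] /=; apply: eq_exist.
  by move=> x y /sval_inj /ginj.
by move=> x; exact: svalP.
Qed.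

Lemma fewer_than_carrier_image (T : Type) (P : T -> Prop) (e : T -> T) :
  ~ injects_into P -> fewer_than_carrier (fun y => exists2 d, P d & y = e d).
Proof.
move=> noinj; apply: fewer_than_carrierI => -[g [ginj gP]]; apply: noinj.
pose k x := s2val (cid2 (gP x)).
have gk x : g x = e (k x) := s2valP' (cid2 (gP x)).
by exists k; split => [x y Ek|x]; [apply: ginj; rewrite !gk Ek | apply: s2valP].
Qed.

Lemma exists_strict_wellorder (T : Type) : exists lt : T -> T -> Prop, strict_wellorder lt.
Proof.
pose Teq : eqType := HB.pack T (gen_eqMixin T).
have [R Rwo] := well_ordering_principle Teq.
have Rmin (P : T -> Prop) x : P x -> exists2 z, P z & forall y, P y -> R z y.
  move=> Px; have [|z [[/asboolP Pz Rz] _]] := Rwo (fun y : Teq => `[< P y >]).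
    by exists x; apply/asboolP.
  by exists z => // y Py; apply: Rz; apply/asboolP.
have Rchain : wo_chain R predT := withinW Rwo.
have Rtotal : total R by move=> x y; apply: wo_chainW Rchain x y isT isT.
have Ranti : antisymmetric R.
  by move=> x y; apply: wo_chain_antisymmetric Rchain x y isT isT.
have Rtrans : transitive R.
  move=> y x z Rxy Ryz.
  have [m Pm Rm] := Rmin (fun w => [\/ w = x, w = y | w = z]) x (Or31 _ _ erefl).
  case: Pm => Em; rewrite {m}Em in Rm.
  - by apply: Rm; apply: Or33.
  - by rewrite (Ranti x y) // Rxy Rm //; apply: Or31.
  - by rewrite -(Ranti y z) // Ryz Rm //; apply: Or32.
exists (fun x y => R x y /\ x <> y); split.
- move=> x; apply: contrapT => accx.
  have [z accz Rz] := Rmin (fun w => ~ Acc _ w) x accx.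
  apply: accz; constructor => y [Ryz nyz]; apply: contrapT => accy.
  by apply: nyz; apply: Ranti; rewrite Ryz Rz.
- move=> x y z [Rxy nxy] [Ryz nyz]; split; first exact: Rtrans Ryz.
  by move=> exz; apply: nxy; apply: Ranti; rewrite Rxy exz.
- move=> x y; have [->|nxy] := pselect (x = y); first by right; left.
  by case/orP: (Rtotal x y) => H; [left|right; right]; split => // /esym.
Qed.

Lemma wf_minimal (T : Type) (lt : T -> T -> Prop) (P : T -> Prop) x :
  well_founded lt -> P x -> exists2 z, P z & forall y, lt y z -> ~ P y.
Proof.
move=> wf; elim/(well_founded_ind wf): x => x IH Px.
have [[y ltyx Py]|none] := pselect (exists2 y, lt y x & P y); first exact: IH ltyx Py.
by exists x => // y ltyx Py; apply: none; exists y.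
Qed.

Lemma strict_wellorder_pullback (T : Type) (lt : T -> T -> Prop) (f : T -> T) :
  injective f -> strict_wellorder lt -> strict_wellorder (fun x y => lt (f x) (f y)).
Proof.
move=> finj [wf tr tot]; split.
- exact: wf_inverse_image.
- by move=> x y z; apply: tr.
- by move=> x y; case: (tot (f x) (f y)) => [|[/finj|]]; auto.
Qed.

(* Order type an initial ordinal: every proper initial segment is smaller than [T]. *)
Lemma exists_initial_wellorder (T : Type) : exists lt : T -> T -> Prop,
  strict_wellorder lt /\ forall c, ~ injects_into (lt^~ c).
Proof.
have [lt0 wo0] := exists_strict_wellorder T.
have [[x0 inj0]|noinj] := pselect (exists x0, injects_into (lt0^~ x0)); last first.
  by exists lt0; split => // c injc; apply: noinj; exists c.
have [x1 [g [ginj gx1]] x1min] :=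
  wf_minimal (P := fun x => injects_into (lt0^~ x)) (swo_wf wo0) inj0.
exists (fun x y => lt0 (g x) (g y)); split; first exact: strict_wellorder_pullback.
move=> c [k [kinj kc]]; apply: (x1min (g c) (gx1 c)).
by exists (fun x => g (k x)); split => // x y /ginj /kinj.
Qed.

Lemma exists_max (T : Type) (lt : T -> T -> Prop) (u : nat -> T) (l : seq nat) :
  strict_wellorder lt -> l != [::] ->
  exists2 n0, n0 \in l & forall n, n \in l -> lt (u n) (u n0) \/ u n = u n0.
Proof.
move=> [_ tr tot]; elim: l => [|a [|b l] IH] // _.
  by exists a => [|n]; rewrite ?inE // => /eqP ->; right.
have [n0 n0l maxn0] := IH isT.
have [ltan0|[ean0|ltn0a]] := tot (u a) (u n0).
- exists n0; first by rewrite inE n0l orbT.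
  by move=> n; rewrite inE => /orP [/eqP ->|/maxn0]; [left|].
- exists n0; first by rewrite inE n0l orbT.
  by move=> n; rewrite inE => /orP [/eqP ->|/maxn0]; [right|].
- exists a; first exact: mem_head.
  move=> n; rewrite inE => /orP [/eqP ->|/maxn0 [ltn|->]]; [by right | |by left].
  by left; apply: tr ltn0a.
Qed.

Lemma update_eq (T : Type) (v : nat -> T) i a : update v i a i = a.
Proof. by rewrite /update eqxx. Qed.

Lemma update_neq (T : Type) (v : nat -> T) i a n : n <> i -> update v i a n = v n.
Proof. by rewrite /update; case: eqP. Qed.

Lemma double_pred_inj : injective (fun m => m.*2.-1).
Proof. by move=> [|x] [|y]; rewrite ?doubleS //= => [[/double_inj ->]]. Qed.

Definition interleave (T : Type) (v w : nat -> T) (k : nat) : T :=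
  if odd k then w k.+1./2 else v k./2.

Lemma interleave_double (T : Type) (v w : nat -> T) n : interleave v w n.*2 = v n.
Proof. by rewrite /interleave odd_double doubleK. Qed.

Lemma interleave_double_pred (T : Type) (v w : nat -> T) n :
  n <> 0 -> interleave v w n.*2.-1 = w n.
Proof. by case: n => // n _; rewrite /interleave doubleS /= odd_double /= doubleK. Qed.

Lemma interleave_comp (T U : Type) (g : T -> U) (v w : nat -> T) :
  (fun k => g (interleave v w k)) = interleave (fun n => g (v n)) (fun n => g (w n)).
Proof. by apply: funext => k; rewrite /interleave; case: odd. Qed.

Section Syntax.

Variable S : signature.
Implicit Types (f g : ppf S).

Lemma sat_ext (A : structure S) f (v1 v2 : nat -> A) :
  (forall n, free f n -> v1 n = v2 n) -> sat v1 f -> sat v2 f.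
Proof.
elim: f v1 v2 => [|i j|r args|f IHf g IHg|i f IHf] v1 v2 /= E.
- by [].
- by rewrite !E; [| right| left].
- have -> // : (fun k => v1 (args k)) = (fun k => v2 (args k)).
  by apply: funext => k; apply: E; exists k.
- by case=> ? ?; split; [apply: (IHf v1) | apply: (IHg v1)] => // n Hn; apply: E; [left|right].
- case=> a Ha; exists a; apply: IHf Ha => n Hn.
  have [->|ni] := pselect (n = i); first by rewrite !update_eq.
  by rewrite !update_neq //; apply: E.
Qed.

Lemma eq_sat (A : structure S) f (v1 v2 : nat -> A) :
  (forall n, free f n -> v1 n = v2 n) -> sat v1 f <-> sat v2 f.
Proof. by move=> E; split; apply: sat_ext => // n /E. Qed.

Fixpoint fv f : seq nat :=
  match f with
  | PBot => [::]
  | PEq i j => [:: i; j]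
  | PRel r args => [seq args k | k <- enum 'I_(arity r)]
  | PAnd f g => fv f ++ fv g
  | PEx i f => [seq n <- fv f | n != i]
  end.

Lemma fvP f n : free f n <-> n \in fv f.
Proof.
elim: f n => [|i j|r args|f IHf g IHg|i f IHf] n /=.
- by [].
- rewrite !inE; split; first by case=> ->; rewrite eqxx ?orbT.
  by case/orP=> /eqP ->; [left|right].
- split; first by case=> k <-; apply: map_f; rewrite mem_enum.
  by case/mapP=> k _ ->; exists k.
- rewrite mem_cat IHf IHg; split; first by case=> ->; rewrite ?orbT.
  by case/orP; [left|right].
- rewrite mem_filter IHf; split; first by case=> /eqP -> ->.
  by case/andP=> /eqP ? ->.
Qed.

Lemma free_bound f : exists n, forall m, free f m -> m < n.
Proof.
exists (\max_(m <- fv f) m).+1 => m /fvP fm.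
by rewrite ltnS (leq_bigmax_seq (F := id) _ fm).
Qed.

Fixpoint rename (s : nat -> nat) f : ppf S :=
  match f with
  | PBot => PBot
  | PEq i j => PEq (s i) (s j)
  | PRel r args => @PRel S r (fun k => s (args k))
  | PAnd f g => PAnd (rename s f) (rename s g)
  | PEx i f => PEx (s i) (rename s f)
  end.

Lemma sat_rename (A : structure S) (s : nat -> nat) f (v : nat -> A) :
  injective s -> sat v (rename s f) <-> sat (fun n => v (s n)) f.
Proof.
move=> sinj; elim: f v => [|i j|r args|f IHf g IHg|i f IHf] v //=.
- by rewrite IHf IHg.
- have upd a : (fun n => update v (s i) a (s n)) = update (fun n => v (s n)) i a.
    by apply: funext => n; rewrite /update (inj_eq sinj).
  by split; case=> a Ha; exists a; [rewrite -upd -IHf | rewrite IHf upd].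
Qed.

Lemma free_rename (s : nat -> nat) f n :
  free (rename s f) n -> exists2 m, free f m & n = s m.
Proof.
elim: f n => [|i j|r args|f IHf g IHg|i f IHf] n //=.
- by case=> ->; [exists i; first left | exists j; first right].
- by case=> k <-; exists (args k) => //; exists k.
- by case=> [/IHf|/IHg] [m fm ->]; exists m => //; [left|right].
- by case=> ni /IHf [m fm nm]; exists m => //; split => // mi; apply: ni; rewrite nm mi.
Qed.

Definition identify0 (Z : seq nat) f : ppf S :=
  foldr (fun n g => PEx n (PAnd (PEq n 0) g)) f Z.

Lemma sat_identify0 (A : structure S) (Z : seq nat) f (v : nat -> A) :
  0 \notin Z -> sat v (identify0 Z f) <-> sat (fun m => if m \in Z then v 0 else v m) f.
Proof.
elim: Z v => [|z Z IH] v /=; first by move=> _; apply: eq_sat.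
rewrite inE negb_or => /andP [/eqP z0 Z0].
have E : (fun m => if m \in Z then update v z (v 0) 0 else update v z (v 0) m)
         = fun m => if m \in z :: Z then v 0 else v m.
  apply: funext => m; rewrite inE update_neq //.
  by rewrite /update; case: eqP; case: (m \in Z).
split => [[a [Ea]]|H].
  by rewrite update_eq update_neq // in Ea; rewrite Ea IH // E.
by exists (v 0); split; rewrite ?update_eq ?update_neq // IH // E.
Qed.

Lemma free_identify0 (Z : seq nat) f n :
  free (identify0 Z f) n -> n = 0 \/ n \notin Z /\ free f n.
Proof.
elim: Z => [|z Z IH] /=; first by right.
case=> nz [[nz'|->]|/IH]; [by [] | by left | ].
by case=> [->|[nZ fn]]; [left | right; rewrite inE negb_or nZ andbT; split => //; apply/eqP].
Qed.

Lemma sat_identify0_shift (A : structure S) (Z : seq nat) f (v : nat -> A) x :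
  0 \notin Z ->
  sat (update v 0 x) (identify0 Z (rename succn f)) <->
  sat (fun n => if n.+1 \in Z then x else v n.+1) f.
Proof.
move=> Z0; rewrite sat_identify0 // sat_rename; last exact: succn_inj.
by apply: eq_sat => n _; rewrite update_eq update_neq.
Qed.

(* The parameters of [f] go to even, those of [g] to odd variables; both keep 0. *)
Definition pp_merge f g : ppf S :=
  PAnd (rename double f) (rename (fun m => m.*2.-1) g).

Lemma sat_pp_merge (A : structure S) f g (v w : nat -> A) a :
  sat (update (interleave v w) 0 a) (pp_merge f g) <->
  sat (update v 0 a) f /\ sat (update w 0 a) g.
Proof.
rewrite /= !sat_rename; [|exact: double_pred_inj|exact: double_inj].
have -> : (fun n => update (interleave v w) 0 a n.*2) = update v 0 a.
  by apply: funext => n; rewrite /update double_eq0 interleave_double.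
have -> // : (fun n => update (interleave v w) 0 a n.*2.-1) = update w 0 a.
apply: funext => -[|n] //.
by rewrite update_neq -?doubleS ?interleave_double_pred // doubleS.
Qed.

Lemma free_pp_merge f g m : free (pp_merge f g) m -> m <> 0 ->
  (exists2 m', free f m' /\ m' <> 0 & forall T (v w : nat -> T), interleave v w m = v m') \/
  (exists2 m', free g m' /\ m' <> 0 & forall T (v w : nat -> T), interleave v w m = w m').
Proof.
case=> /free_rename [m' fm' ->] m0; [left | right]; exists m'.
- by split=> // m'0; rewrite m'0 in m0.
- by move=> T v w; rewrite interleave_double.
- by split=> // m'0; rewrite m'0 in m0.
- by move=> T v w; rewrite interleave_double_pred // => m'0; rewrite m'0 in m0.
Qed.

End Syntax.

Section Transfer.

Variables (S : signature) (A B : structure S) (h : A -> B).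
Hypothesis MB : model (ppTh A) B.

Definition pp_transfer (e : A -> A) (D : A -> Prop) : Prop :=
  forall (psi : ppf S) (u : nat -> A), (forall n, free psi n -> D (u n)) ->
    sat (fun n => h (u n)) psi -> sat (fun n => e (u n)) psi.

(* Sentences true in [B] are true in [A]: otherwise their negation is in [ppTh A]. *)
Lemma pp_transfer_sentence (e : A -> A) psi (u : nat -> A) :
  sentence psi -> sat (fun n => h (u n)) psi -> sat (fun n => e (u n)) psi.
Proof.
move=> psi_sent Bpsi; have [Apsi|nApsi] := pselect (holds A psi); first exact: Apsi.
have [] := MB (l := Neg psi) (conj psi_sent nApsi).
by move=> v; apply: sat_ext Bpsi => n /psi_sent.
Qed.

Variable lt : A -> A -> Prop.
Hypothesis lt_swo : strict_wellorder lt.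

Lemma pp_transfer_segments (e : A -> A) (D : A -> Prop) :
  (forall d, D d -> pp_transfer e (fun x => lt x d \/ x = d)) -> pp_transfer e D.
Proof.
move=> segs psi u Du; have [fv0|fvn0] := eqVneq (fv psi) [::].
  by apply: pp_transfer_sentence => n /fvP; rewrite fv0.
have [n0 /fvP n0psi maxn0] := exists_max u lt_swo fvn0.
by apply: (segs _ (Du _ n0psi)) => n /fvP /maxn0.
Qed.

Section PPType.

Variables (c : A) (e : A -> A).

(* The pp-type over [e] of the elements below [c] that [h c] realizes in [B]:
   variable 0 stands for [c], the other free variables for parameters [e d] with [d < c]. *)
Definition pp_type (chi : ppf S) (w : nat -> A) : Prop :=
  exists u : nat -> A,
    (forall m, free chi m -> m <> 0 -> lt (u m) c /\ w m = e (u m)) /\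
    sat (update (fun n => h (u n)) 0 (h c)) chi.

Lemma pp_type_param chi w n :
  pp_type chi w -> free chi n -> n <> 0 -> exists2 d, lt d c & w n = e d.
Proof. by case=> u [uw _] /uw un /un [ltc ->]; exists (u n). Qed.

(* The variables of [psi] sent to [c] are identified with the distinguished variable 0. *)
Lemma pp_transfer_step :
  (forall chi w, pp_type chi w -> sat (update w 0 (e c)) chi) ->
  pp_transfer e (fun x => lt x c \/ x = c).
Proof.
move=> ec_realizes psi u u_le Bpsi.
pose Z := [seq n.+1 | n <- fv psi & `[< u n = c >]].
have Z0 : 0 \notin Z by apply/mapP; case.
have inZ n : free psi n -> reflect (u n = c) (n.+1 \in Z).
  by move=> /fvP fn; rewrite /Z (mem_map succn_inj) mem_filter fn andbT; apply: asboolP.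
have Tchi : pp_type (identify0 Z (rename succn psi)) (fun m => e (u m.-1)).
  exists (fun m => u m.-1); split.
    move=> m fm m0; case/free_identify0: fm => [//|[mZ /free_rename [n fn En]]].
    rewrite En in mZ *; split => //.
    by case: (inZ n fn) mZ => [_ /negP[]|nunc _]; case: (u_le n fn) => // /nunc [].
  by rewrite sat_identify0_shift //; apply: sat_ext Bpsi => n fn; case: inZ => // ->.
move: (ec_realizes _ _ Tchi); rewrite sat_identify0_shift //.
by apply: sat_ext => n fn; case: inZ => // ->.
Qed.

Lemma pp_type_merge f v g w :
  pp_type f v -> pp_type g w -> pp_type (pp_merge f g) (interleave v w).
Proof.
case=> u1 [u1v Bf] [u2 [u2w Bg]]; exists (interleave u1 u2); split.
  move=> m /free_pp_merge fm /[dup] /fm [] [m' [fm' m'0] E] m0; rewrite !E.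
  - exact: u1v.
  - exact: u2w.
by rewrite interleave_comp; apply/sat_pp_merge.
Qed.

Hypothesis e_below : pp_transfer e (lt^~ c).

Lemma pp_type_sat chi w : pp_type chi w -> exists a, sat (update w 0 a) chi.
Proof.
case=> u [uw Bchi].
have /= [a Achi] : sat (fun n => e (u n)) (PEx 0 chi).
  by apply: e_below => [n [n0 /uw /(_ n0) []] | ] //; exists (h c).
exists a; apply: sat_ext Achi => n fn.
by rewrite /update; case: eqP => // /eqP n0; rewrite (uw n fn _).2 //; apply/eqP.
Qed.

Lemma pp_type_finsat (l : seq (ppf S * (nat -> A))) :
  (forall p, List.In p l -> pp_type p.1 p.2) ->
  exists a, forall p, List.In p l -> sat (update p.2 0 a) p.1.
Proof.
move=> l_type.
suff [chi [w [Tchi chi_l]]] : exists chi w, pp_type chi w /\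
    forall a, sat (update w 0 a) chi -> forall p, List.In p l -> sat (update p.2 0 a) p.1.
  by have [a Achi] := pp_type_sat Tchi; exists a; apply: chi_l.
elim: l l_type => [|[f v] l IH] l_type.
  by exists (PEq 0 0), (fun _ => c); split => //; exists (fun _ => c); split => // m [] ->.
have [chi [w [Tchi chi_l]]] := IH (fun p lp => l_type p (or_intror lp)).
exists (pp_merge f chi), (interleave v w); split.
  exact: pp_type_merge (l_type _ (or_introl erefl)) Tchi.
by move=> a /sat_pp_merge [Af Achi] p [<-|lp] //; apply: chi_l.
Qed.

End PPType.

End Transfer.

Definition realizer (S : signature) (A : structure S) (c : A)
    (Sigma : ppf S -> (nat -> A) -> Prop) : A :=
  match pselect (exists a : A, forall f w, Sigma f w -> sat (update w 0 a) f) with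
  | left realized => projT1 (cid realized)
  | right _ => c
  end.

Lemma realizerP (S : signature) (A : structure S) (c : A) Sigma :
  (exists a : A, forall f w, Sigma f w -> sat (update w 0 a) f) ->
  forall f w, Sigma f w -> sat (update w 0 (realizer c Sigma)) f.
Proof. by rewrite /realizer; case: pselect => // realized _; case: cid. Qed.

Section Extension.

Variables (S : signature) (A B : structure S) (h : A -> B) (lt : A -> A -> Prop).
Hypothesis lt_swo : strict_wellorder lt.

Lemma eq_pp_type c (e1 e2 : A -> A) :
  (forall d, lt d c -> e1 d = e2 d) -> pp_type h lt c e1 = pp_type h lt c e2.
Proof.
move=> e12; apply: funext => chi; apply: funext => w; apply: propext.
by split; case=> u [uw Bchi]; exists u; split => // m fm m0;
  have [ltc ->] := uw m fm m0; rewrite e12.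
Qed.

Definition extension : A -> A :=
  Fix (swo_wf lt_swo) (fun _ => A) (fun c g =>
    realizer c (pp_type h lt c (fun d => if pselect (lt d c) is left ltdc then g d ltdc else d))).

Lemma extensionE c : extension c = realizer c (pp_type h lt c extension).
Proof.
rewrite /extension Fix_eq => [|x g1 g2 g12]; congr realizer; apply: eq_pp_type => d ltdc.
  by case: pselect.
by case: pselect => // ?; apply: g12.
Qed.

Hypothesis MB : model (ppTh A) B.
Hypothesis lt_initial : forall c, ~ injects_into (lt^~ c).
Hypothesis A_saturated : pp_saturated A.

Lemma pp_transfer_extension : pp_transfer h extension (fun _ => True).
Proof.
have segs c : pp_transfer h extension (fun x => lt x c \/ x = c).
  elim/(well_founded_ind (swo_wf lt_swo)): c => c IH.
  have below : pp_transfer h extension (lt^~ c) := pp_transfer_segments MB lt_swo IH.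
  apply: pp_transfer_step => chi w Tchi; rewrite extensionE; move: Tchi; apply: realizerP.
  apply: (A_saturated (fewer_than_carrier_image (e := extension) (@lt_initial c))).
    by move=> f v Tf n fn n0; apply: pp_type_param Tf fn n0.
  exact: pp_type_finsat below.
by apply: (pp_transfer_segments MB lt_swo) => d _; apply: segs.
Qed.

End Extension.

Section Epc.

Variable S : signature.

Definition atom (r : sym S) : ppf S := @PRel S r (@nat_of_ord (arity r)).

Lemma sat_atom (C : structure S) (r : sym S) (v : nat -> C) (t : 'I_(arity r) -> C) :
  (forall k : 'I_(arity r), v k = t k) -> sat v (atom r) <-> interp C r t.
Proof.
by move=> vt; rewrite /atom /=; have -> : (fun k => v (nat_of_ord k)) = t by apply: funext.
Qed.

Lemma tuple_assignment (T : Type) (a : T) n (t : 'I_n -> T) :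
  exists v : nat -> T, forall k : 'I_n, v k = t k.
Proof. by exists (fun m => if insub m is Some k then t k else a) => k; rewrite valK. Qed.

Lemma pp_transfer_hom (A B : structure S) (h : A -> B) (e : A -> A) (a : A) :
  hom h -> pp_transfer h e (fun _ => True) -> hom e.
Proof.
move=> hh he r t At; have [v vt] := tuple_assignment a t.
have Bv : sat (fun n => h (v n)) (atom r).
  by apply/(sat_atom (fun k => congr1 h (vt k))); apply: hh.
by have /(sat_atom (fun k => congr1 e (vt k))) := he (atom r) v (fun _ _ => I) Bv.
Qed.

Lemma epc_core (A : structure S) : epc (ppTh A) A -> core A.
Proof.
move=> [MA Aepc] e he; split=> //; split.
  by move=> x y exy; apply: (Aepc A e MA he (fun n => if n == 0 then x else y) (PEq 0 1)).
move=> r t Aet; have [[a _]|A0] := pselect (exists a : A, True); last first.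
  by have -> : t = (fun k => e (t k)) by apply: funext => k; case: A0; exists (t k).
have [v vt] := tuple_assignment a t.
apply/(sat_atom vt); apply: (Aepc A e MA he v).
exact/(sat_atom (fun k => congr1 e (vt k))).
Qed.

Lemma finite_pp_saturated (A : structure S) : finite_structure A -> pp_saturated A.
Proof.
move=> [s sA] P _ Sigma _ finsat; apply: contrapT => unrealized.
have bad a : exists f v, Sigma f v /\ ~ sat (update v 0 a) f.
  apply: contrapT => good; apply: unrealized; exists a => f v Sfv.
  by apply: contrapT => nsat; apply: good; exists f, v.
have [l [lSigma lbad]] : exists l : seq (ppf S * (nat -> A)),
    (forall p, List.In p l -> Sigma p.1 p.2) /\
    forall a, List.In a s -> exists2 p, List.In p l & ~ sat (update p.2 0 a) p.1.
  elim: s {sA} => [|x s [l [lSigma lbad]]]; first by exists nil.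
  have [f [v [Sfv nsat]]] := bad x.
  exists ((f, v) :: l); split => [p [<-|/lSigma]|a [<-|/lbad [p lp np]]] //.
    by exists (f, v); first left.
  by exists p; first right.
have [a la] := finsat l lSigma.
by have [p lp] := lbad a (sA a); apply; apply: la.
Qed.

Lemma core_epc (A : structure S) :
  pp_saturated A -> all_pp_definable_named A -> core A -> epc (ppTh A) A.
Proof.
move=> Asat named Acore; split=> [[f|f] [] //|B h MB hh v phi Bphi].
have [lt [lt_swo lt_initial]] := exists_initial_wellorder A.
pose e := extension h lt_swo.
have He : pp_transfer h e (fun _ => True) := pp_transfer_extension lt_swo MB lt_initial Asat.
have [_ [_ e_reflects]] := Acore e (pp_transfer_hom (v 0) hh He).
have [n phi_n] := free_bound phi.
pose R (t : 'I_n -> A) := forall w : nat -> A, (forall i : 'I_n, w i = t i) -> sat w phi.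
have [r [rn rR]] := named n R (ex_intro _ phi (conj phi_n (fun t => iff_refl (R t)))).
suff Re : R (fun i => e (v i)).
  by apply: (proj1 (rR _) _ v) => //; apply: e_reflects; apply/(rR (fun i => e (v i))).
move=> w we; apply: sat_ext (He phi v (fun _ _ => I) Bphi) => m /phi_n m_n.
by rewrite (we (Ordinal m_n)).
Qed.

End Epc.

Theorem proposition4 (S : signature) (A : structure S) :
  (epc (ppTh A) A -> core A) /\
  ((pp_saturated A \/ finite_structure A) -> all_pp_definable_named A ->
   core A -> epc (ppTh A) A).
Proof.
split; first exact: epc_core.
by move=> Asat; apply: core_epc; case: Asat => [//|/finite_pp_saturated].
Qed.
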